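(* Consider the amortized variant of the algorithmic framework described below with parameters $\eta=1$, $\gamma\in(0,1)$ and $\xi=\gamma^{-1}+\tfrac12$. Then the framework maintains $\ell_i\le(1+\eta)T\,(=2T)$ for every machine $i$, where $\ell_i=\sum_{j\in \hat J_i\cup\check J_i}p_j/s_i$ is the total load of machine $i$ and $T$ is the current guess.
   Context: Problem: machines $1,\dots,m$ with speeds $s_1\ge s_2\ge\dots\ge s_m>0$; jobs arrive online, job $j$ has size $p_j>0$; the load of job $j$ on machine $i$ is $p_j/s_i$. Framework (amortized variant): it keeps a guess $T$, for each machine $i$ a partition of its jobs into old jobs $\hat J_i$ and new jobs $\check J_i$, and a potential $\pi_i$ per machine. Machine $i$ is saturated if $\check\ell_i:=\sum_{j\in\check J_i}p_j/s_i\ge T$, and $\eta$-eligible for job $j$ if $p_j/s_i\le \eta T$. Let $\tilde{\mathcal M}(\eta,j)$ be the set of machines that are $\eta$-eligible for $j$ and not saturated. When the first job $j_1$ arrives, set $T=p_{j_1}/s_1$ and place $j_1$ on machine 1. When a later job $j^*$ arrives, put it into a priority queue $Q$ (larger size = higher priority) and run: while $Q$ is nonempty, remove the largest job $j'$ from $Q$; then repeat: if $\tilde{\mathcal M}(\eta,j')\ne\emptyset$, choose a slowest machine $i'$ in it, move every $j\in\hat J_{i'}$ with $p_j\ge \eta^{-1}p_{j'}$ from $\hat J_{i'}$ to $\check J_{i'}$, and if $i'$ is still not saturated stop repeating; otherwise set $T:=\xi T$ and for every machine $i$ move all jobs of $\check J_i$ to $\hat J_i$ and set $\pi_i=0$.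 After a machine $i'$ is found, set $\pi:=\gamma p_{j'}+\pi_{i'}$; go through the jobs $j\in\hat J_{i'}$ in non-increasing order of size and, whenever $p_j\le\pi$, set $\pi:=\pi-p_j$ and move $j$ from $\hat J_{i'}$ into $Q$ (removing it from $i'$). Finally add $j'$ to $\check J_{i'}$ and set $\pi_{i'}:=\pi$. *)

(* Amortized variant of the online load-balancing framework
   on related machines, modelled as a small-step transition system. *)
From HB Require Import structures.
From mathcomp Require Import all_boot all_order all_algebra.
Set Implicit Arguments. Unset Strict Implicit. Unset Printing Implicit Defensive.
Import Order.TTheory GRing.Theory Num.Theory.
Local Open Scope ring_scope.

Section Framework.
Variable R : realFieldType.
Variable m : nat.
(* machines are 'I_m.+1 ; machine ord0 is "machine 1" (the fastest) *)
Variable s : 'I_m.+1 -> R.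
Variables eta gamma xi : R.

(* A job is identified with its size p_j > 0 (only sizes matter). *)
Record state := State {
  Tg  : R;                       (* the guess T *)
  hat : 'I_m.+1 -> seq R;        (* old jobs  \hat J_i *)
  chk : 'I_m.+1 -> seq R;        (* new jobs  \check J_i *)
  pot : 'I_m.+1 -> R;
  que : seq R;
  cur : option R                 (* job j' currently being assigned, if any *)
}.

Definition sumR (l : seq R) : R := \sum_(p <- l) p.

Definition load (st : state) (i : 'I_m.+1) : R :=
  sumR (hat st i ++ chk st i) / s i.

(* i is eta-eligible for a job of size p and not saturated *)
Definition avail (T : R) (c : 'I_m.+1 -> seq R) (p : R) (i : 'I_m.+1) : bool :=
  (p / s i <= eta * T) && (sumR (c i) / s i < T).

Definition upd {A : Type} (f : 'I_m.+1 -> A) (i : 'I_m.+1) (v : A) :=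
  fun k => if k == i then v else f k.

Definition stay_old (p : R) (l : seq R) := filter (fun q => q < p / eta) l.
Definition to_new (p : R) (l : seq R) := filter (fun q => p / eta <= q) l.

(* greedy pass through jobs (already sorted non-increasingly):
   returns (final potential, kept jobs, jobs moved into Q) *)
Fixpoint greedy (pi : R) (l : seq R) : R * seq R * seq R :=
  match l with
  | [::] => (pi, [::], [::])
  | x :: l' =>
      if x <= pi then
        let: (pi', k, r) := greedy (pi - x) l' in (pi', k, x :: r)
      else
        let: (pi', k, r) := greedy pi l' in (pi', x :: k, r)
  end.

Definition nonincr_sort (l : seq R) := sort (fun x y : R => y <= x) l.

Inductive step : state -> state -> Prop :=
| step_arrive T h c pi p :
    0 < p ->
    step (State T h c pi [::] None) (State T h c pi [:: p] None)
| step_pick T h c pi q j :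
    j \in q -> (forall x, x \in q -> x <= j) ->
    step (State T h c pi q None) (State T h c pi (rem j q) (Some j))
| step_scale T h c pi q j :
    (forall i, ~~ avail T c j i) ->
    step (State T h c pi q (Some j))
         (State (xi * T) (fun i => h i ++ c i) (fun _ => [::]) (fun _ => 0) q (Some j))
(* slowest available machine i'; after moving big old jobs it is saturated:
   repeat *)
| step_saturate T h c pi q j i :
    avail T c j i -> (forall k, avail T c j k -> s i <= s k) ->
    T <= sumR (c i ++ to_new j (h i)) / s i ->
    step (State T h c pi q (Some j))
         (State T (upd h i (stay_old j (h i))) (upd c i (c i ++ to_new j (h i)))
                pi q (Some j))
(* slowest available machine i'; it is still not saturated: place j' there
   after the amortized migration of old jobs into Q *)
| step_place T h c pi q j i :
    avail T c j i -> (forall k, avail T c j k -> s i <= s k) ->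
    sumR (c i ++ to_new j (h i)) / s i < T ->
    let g := greedy (gamma * j + pi i) (nonincr_sort (stay_old j (h i))) in
    step (State T h c pi q (Some j))
         (State T (upd h i g.1.2) (upd c i (c i ++ to_new j (h i) ++ [:: j]))
                (upd pi i g.1.1) (q ++ g.2) None).

(* state right after the first job (size p1) was placed on machine 1 *)
Definition init (p1 : R) : state :=
  State (p1 / s ord0) (fun _ => [::])
        (fun i => if i == ord0 then [:: p1] else [::]) (fun _ => 0) [::] None.

Inductive reach (p1 : R) : state -> Prop :=
| reach_init : reach p1 (init p1)
| reach_step st st' : reach p1 st -> step st st' -> reach p1 st'.

End Framework.

(** Fix a machine i and write U = T s_i, H and C for the total sizes of its
    old and new jobs and P for its potential.  Invariant: old jobs have size
    at most U / xi, new jobs at most U, P >= 0, and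
      (A)  (H - P + gamma C) xi <= 2U,        (B)  H + C <= 2U.
    Raising T to xi T makes every job old and turns (B) into (A); promoting
    big old jobs only lowers H - P + gamma C.  When j is placed, the credit
    gamma j added to the potential pays for the term gamma j it adds to
    gamma C, and migration lowers H and P by the same amount, so (A) survives.
    For (B): if no old job stays, the load is at most U (the machine was not
    saturated) plus j <= U; otherwise some old job x stayed, so the greedy
    migration leaves P < x <= U / xi, and (A) with gamma xi >= 1 + gamma/2
    gives (B).  Only the initial state needs gamma xi <= 2. *)

From mathcomp Require Import all_boot all_order all_algebra.
From mathcomp Require Import lra.
Set Implicit Arguments. Unset Strict Implicit. Unset Printing Implicit Defensive.
Import Order.TTheory GRing.Theory Num.Theory.
Local Open Scope ring_scope.

Section SumR.
Variable R : realFieldType.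
Implicit Types (l : seq R) (x : R).

Lemma sumR_nil : sumR (R := R) [::] = 0.
Proof. by rewrite /sumR big_nil. Qed.

Lemma sumR_cons x l : sumR (x :: l) = x + sumR l.
Proof. by rewrite /sumR big_cons. Qed.

Lemma sumR_cat l1 l2 : sumR (l1 ++ l2) = sumR l1 + sumR l2.
Proof. by rewrite /sumR big_cat. Qed.

Lemma sumR_ge0 l : {in l, forall x, 0 <= x} -> 0 <= sumR l.
Proof. by move=> l_ge0; rewrite /sumR big_seq sumr_ge0. Qed.

Lemma mem_le_sumR l x : {in l, forall y, 0 <= y} -> x \in l -> x <= sumR l.
Proof.
move=> l_ge0 xl; rewrite /sumR (big_rem x) //= lerDl.
by apply: sumR_ge0 => y /mem_rem /l_ge0.
Qed.

Lemma sumR_old_new (eta p : R) l :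
  sumR l = sumR (stay_old eta p l) + sumR (to_new eta p l).
Proof.
rewrite /sumR !big_filter (bigID (fun q => q < p / eta)) /=.
by congr (_ + _); apply: eq_bigl => q; rewrite leNgt.
Qed.

End SumR.

Section Greedy.
Variable R : realFieldType.
Implicit Types (pi x : R) (l : seq R).

Lemma greedy_cons pi x l :
  greedy pi (x :: l) =
  if x <= pi then
    ((greedy (pi - x) l).1.1, (greedy (pi - x) l).1.2, x :: (greedy (pi - x) l).2)
  else ((greedy pi l).1.1, x :: (greedy pi l).1.2, (greedy pi l).2).
Proof. by rewrite /=; case: ifP => _; case: greedy => [[]]. Qed.

Lemma greedy_sum pi l :
  sumR l = sumR (greedy pi l).1.2 + sumR (greedy pi l).2.
Proof.
elim: l pi => [|x l IH] pi; first by rewrite /= sumR_nil addr0.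
rewrite greedy_cons; case: ifP => _ /=; rewrite !sumR_cons.
  by rewrite (IH (pi - x)); lra.
by rewrite (IH pi); lra.
Qed.

Lemma greedy_pot pi l : (greedy pi l).1.1 = pi - sumR (greedy pi l).2.
Proof.
elim: l pi => [|x l IH] pi; first by rewrite /= sumR_nil subr0.
rewrite greedy_cons; case: ifP => _ //=.
by rewrite sumR_cons IH; lra.
Qed.

Lemma greedy_subseq pi l :
  subseq (greedy pi l).1.2 l && subseq (greedy pi l).2 l.
Proof.
elim: l pi => [|x l IH] pi //; rewrite greedy_cons.
case: ifP => _; [case/andP: (IH (pi - x)) | case/andP: (IH pi)] => kept moved.
  by rewrite (subseq_trans kept (subseq_cons l x)) /= eqxx.
by rewrite (subseq_trans moved (subseq_cons l x)) andbT /= eqxx.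
Qed.

Lemma greedy_pot_ge0 pi l : 0 <= pi -> 0 <= (greedy pi l).1.1.
Proof.
elim: l pi => [|x l IH] pi // pi_ge0; rewrite greedy_cons.
by case: ifP => x_le /=; apply: IH; rewrite ?subr_ge0.
Qed.

Lemma greedy_pot_le pi l : {in l, forall x, 0 <= x} -> (greedy pi l).1.1 <= pi.
Proof.
move=> l_ge0; have /andP[_ /mem_subseq moved_l] := greedy_subseq pi l.
by rewrite greedy_pot gerBl sumR_ge0 // => x /moved_l /l_ge0.
Qed.

Lemma greedy_pot_lt_kept pi l : {in l, forall x, 0 <= x} ->
  {in (greedy pi l).1.2, forall y, (greedy pi l).1.1 < y}.
Proof.
elim: l pi => [|x l IH] pi // l_ge0.
have l'_ge0 : {in l, forall y, 0 <= y} by move=> y yl; rewrite l_ge0 // inE yl orbT.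
rewrite greedy_cons; case: ifP => x_le /=; first exact: IH.
move=> y; rewrite inE => /predU1P[->|]; last exact: IH.
by rewrite (le_lt_trans (greedy_pot_le pi l'_ge0)) // ltNge x_le.
Qed.

End Greedy.

Section Invariant.
Variables (R : realFieldType) (m : nat) (s : 'I_m.+1 -> R) (gamma xi : R).
Hypothesis s_gt0 : forall i, 0 < s i.
Hypothesis gamma_gt0 : 0 < gamma.
Hypothesis gamma_lt1 : gamma < 1.
Hypothesis gamma_xi_lb : 1 + gamma / 2 <= gamma * xi.
Hypothesis gamma_xi_ub : gamma * xi <= 2.

Lemma xi_gt1 : 1 < xi.
Proof.
rewrite -(ltr_pM2l gamma_gt0) mulr1 (lt_le_trans _ gamma_xi_lb) //.
by rewrite (lt_trans gamma_lt1) // ltrDl divr_gt0.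
Qed.

Lemma xi_gt0 : 0 < xi.
Proof. exact: lt_trans ltr01 xi_gt1. Qed.

Lemma le_of_mulxi_le x U : 0 <= x -> x * xi <= U -> x <= U.
Proof. by move=> x_ge0; apply: le_trans; rewrite ler_peMr // ltW // xi_gt1. Qed.

(* gamma xi (H + C) <= 2U + gamma U - (1 - gamma) xi (H - P) <= 2 gamma xi U *)
Lemma amortized_load_bound U H C P : 0 <= U ->
  (H - P + gamma * C) * xi <= 2 * U -> P * xi <= U -> P <= H -> H + C <= 2 * U.
Proof.
move=> U_ge0 pot_le P_le PH.
have slack : 0 <= (H - P) * xi * (1 - gamma).
  by rewrite !mulr_ge0 ?subr_ge0 ?(ltW xi_gt0) ?(ltW gamma_lt1).
have gP : gamma * (P * xi) <= gamma * U by rewrite ler_pM2l.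
have gU : (1 + gamma / 2) * (2 * U) <= gamma * xi * (2 * U).
  by rewrite ler_wpM2r ?mulr_ge0.
rewrite -(ler_pM2l (mulr_gt0 gamma_gt0 xi_gt0)); lra.
Qed.

Lemma promoted_jobs_ok U h (eta j : R) : {in h, forall x, 0 < x /\ x * xi <= U} ->
  {in to_new eta j h, forall x, 0 < x /\ x <= U}.
Proof.
move=> h_ok x; rewrite mem_filter => /andP[_ /h_ok[x_gt0 x_le]].
by split=> //; apply: le_of_mulxi_le (ltW x_gt0) x_le.
Qed.

Definition machine_ok (U : R) (h c : seq R) (pi : R) :=
  [/\ {in h, forall x, 0 < x /\ x * xi <= U}, {in c, forall x, 0 < x /\ x <= U},
      0 <= pi, (sumR h - pi + gamma * sumR c) * xi <= 2 * U
    & sumR h + sumR c <= 2 * U].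

Lemma machine_ok_nil U : 0 <= U -> machine_ok U [::] [::] 0.
Proof. by move=> U_ge0; split; rewrite // ?sumR_nil; lra. Qed.

Lemma machine_ok_single p : 0 < p -> machine_ok p [::] [:: p] 0.
Proof.
move=> p_gt0; split => //; rewrite ?sumR_cons ?sumR_nil.
- by move=> x; rewrite inE => /eqP ->; split.
- by rewrite subrr add0r addr0 mulrAC ler_pM2r.
- lra.
Qed.

Lemma machine_ok_rescale U h c pi : 0 <= U ->
  machine_ok U h c pi -> machine_ok (xi * U) (h ++ c) [::] 0.
Proof.
move=> U_ge0 [h_ok c_ok _ _ load_le].
have xiU : U <= xi * U by rewrite ler_peMl // ltW // xi_gt1.
split => //; rewrite ?sumR_nil ?sumR_cat.
- move=> x; rewrite mem_cat => /orP[/h_ok | /c_ok] [x_gt0 x_le]; split => //;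
    rewrite mulrC (ler_pM2l xi_gt0) //.
  exact: le_of_mulxi_le (ltW x_gt0) x_le.
- by rewrite mulr0 addr0 subr0 mulrCA mulrC (ler_pM2l xi_gt0).
- by rewrite addr0; lra.
Qed.

Lemma machine_ok_promote U h c pi j :
  machine_ok U h c pi -> machine_ok U (stay_old 1 j h) (c ++ to_new 1 j h) pi.
Proof.
move=> [h_ok c_ok pi_ge0 pot_le load_le].
have new_ok := promoted_jobs_ok (eta := 1) (j := j) h_ok.
have new_ge0 : 0 <= sumR (to_new 1 j h) by apply: sumR_ge0 => x /new_ok[/ltW].
have old_new := sumR_old_new 1 j h.
have gamma_new := ler_piMl new_ge0 (ltW gamma_lt1).
split => //; rewrite ?sumR_cat.
- by move=> x; rewrite mem_filter => /andP[_ /h_ok].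
- by move=> x; rewrite mem_cat => /orP[/c_ok | /new_ok].
- apply: le_trans pot_le; rewrite (ler_pM2r xi_gt0); lra.
- lra.
Qed.

Lemma machine_ok_place U h c pi j L :
  0 < j -> j <= U -> sumR (c ++ to_new 1 j h) <= U -> perm_eq L (stay_old 1 j h) ->
  machine_ok U h c pi ->
  let g := greedy (gamma * j + pi) L in
  machine_ok U g.1.2 (c ++ to_new 1 j h ++ [:: j]) g.1.1.
Proof.
move=> j_gt0 j_le promoted_le permL [h_ok c_ok pi_ge0 pot_le _] g.
have L_h : {subset L <= h} by move=> x; rewrite (perm_mem permL) mem_filter => /andP[].
have /andP[/mem_subseq kept_L _] := greedy_subseq (gamma * j + pi) L.
have kept_h : {subset g.1.2 <= h} by move=> x /kept_L /L_h.
have L_ge0 : {in L, forall x, 0 <= x} by move=> x /L_h /h_ok[/ltW].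
have sumL : sumR L = sumR (stay_old 1 j h) by rewrite /sumR (perm_big _ permL).
have g_ge0 : 0 <= g.1.1.
  by apply: greedy_pot_ge0; rewrite addr_ge0 // mulr_ge0 // ltW.
have new_ok := promoted_jobs_ok (eta := 1) (j := j) h_ok.
have new_ge0 : 0 <= sumR (to_new 1 j h) by apply: sumR_ge0 => x /new_ok[/ltW].
have U_ge0 : 0 <= U by apply: le_trans j_le; apply: ltW.
have kept_moved := greedy_sum (gamma * j + pi) L.
have pot_eq := greedy_pot (gamma * j + pi) L.
have old_new := sumR_old_new 1 j h.
have gamma_new := ler_piMl new_ge0 (ltW gamma_lt1).
have new_pot_le :
  (sumR g.1.2 - g.1.1 + gamma * sumR (c ++ to_new 1 j h ++ [:: j])) * xi <= 2 * U.
  apply: le_trans pot_le; rewrite (ler_pM2r xi_gt0).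
  by rewrite !sumR_cat sumR_cons sumR_nil; lra.
split => //.
- by move=> x /kept_h /h_ok.
- move=> x; rewrite !mem_cat inE => /orP[/c_ok // | /orP[/new_ok // | /eqP ->]].
  by split.
have [kept_nil | [x x_kept]] : g.1.2 = [::] \/ exists x, x \in g.1.2.
  by case: g.1.2 => [|x kept]; [left | right; exists x; rewrite mem_head].
  by move: promoted_le; rewrite kept_nil !sumR_cat sumR_cons !sumR_nil; lra.
have [x_gt0 x_le] := h_ok x (kept_h x x_kept).
have pot_x : g.1.1 < x := greedy_pot_lt_kept L_ge0 x_kept.
apply: amortized_load_bound new_pot_le _ _ => //.
- by apply: le_trans x_le; rewrite (ler_pM2r xi_gt0) ltW.
- apply: (le_trans (ltW pot_x)); apply: mem_le_sumR x_kept.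
  by move=> y /kept_h /h_ok[/ltW].
Qed.

Definition state_ok (st : state R m) :=
  [/\ 0 < Tg st, {in que st, forall x, 0 < x}, (forall x, cur st = Some x -> 0 < x)
    & forall i, machine_ok (Tg st * s i) (hat st i) (chk st i) (pot st i)].

Lemma state_ok_init p1 : 0 < p1 -> state_ok (init s p1).
Proof.
move=> p1_gt0; have s0_gt0 := s_gt0 ord0.
split => //=; first by rewrite divr_gt0.
move=> i; case: eqP => [->|_].
  by rewrite divfK ?gt_eqF //; apply: machine_ok_single.
by apply: machine_ok_nil; rewrite mulr_ge0 ?divr_ge0 ?ltW.
Qed.

Lemma state_ok_step st st' : state_ok st -> step s 1 gamma xi st st' -> state_ok st'.
Proof.
move=> ok_st step_st; case: step_st ok_st => {st st'}.
- by move=> T h c pi p p_gt0 [T_gt0 _ _ mach_ok]; split=> // x; rewrite inE => /eqP ->.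
- move=> T h c pi q j j_q _ [T_gt0 que_gt0 _ mach_ok].
  by split=> // [x /mem_rem /que_gt0 // | x [<-]]; apply: que_gt0.
- move=> T h c pi q j _ [T_gt0 que_gt0 cur_gt0 mach_ok]; split=> //=.
    by rewrite mulr_gt0 ?xi_gt0.
  move=> i; rewrite -mulrA; apply: machine_ok_rescale (mach_ok i).
  exact: mulr_ge0 (ltW T_gt0) (ltW (s_gt0 i)).
- move=> T h c pi q j i _ _ _ [T_gt0 que_gt0 cur_gt0 mach_ok]; split=> //= k.
  by rewrite /upd; case: eqP => [-> | _]; [apply: machine_ok_promote | apply: mach_ok].
move=> T h c pi q j i avail_i _ unsat g [T_gt0 que_gt0 cur_gt0 mach_ok].
have j_gt0 : 0 < j by apply: cur_gt0.
move: avail_i unsat => /andP[+ _]; rewrite mul1r !ltr_pdivrMr ?ler_pdivrMr // => j_le unsat.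
have ok_i :=
  machine_ok_place j_gt0 j_le (ltW unsat) (permEl (perm_sort _ _)) (mach_ok i).
split=> //=.
- have [h_ok _ _ _ _] := mach_ok i.
  have /andP[_ /mem_subseq moved_L] :=
    greedy_subseq (gamma * j + pi i) (nonincr_sort (stay_old 1 j (h i))).
  move=> x; rewrite mem_cat => /orP[/que_gt0 // | /moved_L].
  by rewrite mem_sort mem_filter => /andP[_ /h_ok[]].
- by move=> k; rewrite /upd; case: eqP => [-> | _]; [apply: ok_i | apply: mach_ok].
Qed.

Lemma state_ok_reach p1 st : 0 < p1 -> reach s 1 gamma xi p1 st -> state_ok st.
Proof.
move=> p1_gt0; elim=> [|st1 st2 _ ok_st1 step_st]; first exact: state_ok_init.
exact: state_ok_step step_st.
Qed.

End Invariant.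

Theorem lemma4 (R : realFieldType) (m : nat) (s : 'I_m.+1 -> R) (gamma p1 : R)
    (st : state R m) :
  (forall i j : 'I_m.+1, (i <= j)%N -> s j <= s i) ->
  (forall i, 0 < s i) ->
  0 < gamma -> gamma < 1 -> 0 < p1 ->
  reach s 1 gamma (gamma^-1 + 2^-1) p1 st ->
  forall i : 'I_m.+1, load s st i <= (1 + 1) * Tg st.
Proof.
move=> _ s_gt0 gamma_gt0 gamma_lt1 p1_gt0 reach_st i.
have gamma_xi : gamma * (gamma^-1 + 2^-1) = 1 + gamma / 2.
  by rewrite mulrDr mulfV ?gt_eqF.
have xi_lb : 1 + gamma / 2 <= gamma * (gamma^-1 + 2^-1) by rewrite gamma_xi.
have xi_ub : gamma * (gamma^-1 + 2^-1) <= 2 by rewrite gamma_xi; lra.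
have [_ _ _ /(_ i)[_ _ _ _ load_le]] :=
  state_ok_reach s_gt0 gamma_gt0 gamma_lt1 xi_lb xi_ub p1_gt0 reach_st.
by rewrite /load ler_pdivrMr // sumR_cat; lra.
Qed.
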